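(* For $n\ge 2$, the group $TVH_n$ is generated by the elements $x_{kl}$ ($1\le k\ne l\le n$) and $\gamma_j$ ($1\le j\le n$), and a complete set of defining relations in these generators is: $x_{ij}x_{kl}=x_{kl}x_{ij}$ for pairwise distinct $i,j,k,l$; $x_{ik}x_{kj}x_{ik}=x_{kj}x_{ik}x_{kj}$ for pairwise distinct $i,j,k$; $\gamma_i^2=1$; $\gamma_i\gamma_j=\gamma_j\gamma_i$ for $i\ne j$; $x_{ij}\gamma_k=\gamma_k x_{ij}$ for pairwise distinct $i,j,k$; $x_{ij}=\gamma_i\gamma_j x_{ji}\gamma_j\gamma_i$ for $i\ne j$.
   Context: For $n\ge 2$, the twisted virtual braid group $TVB_n$ is the group with generators $\sigma_1,\dots,\sigma_{n-1}$, $\rho_1,\dots,\rho_{n-1}$, $\gamma_1,\dots,\gamma_n$ and defining relations: $\sigma_i\sigma_{i+1}\sigma_i=\sigma_{i+1}\sigma_i\sigma_{i+1}$ ($1\le i\le n-2$); $\sigma_i\sigma_j=\sigma_j\sigma_i$ ($|i-j|\ge 2$); $\rho_i^2=1$; $\rho_i\rho_j=\rho_j\rho_i$ ($|i-j|\ge2$); $\rho_i\rho_{i+1}\rho_i=\rho_{i+1}\rho_i\rho_{i+1}$ ($1\le i\le n-2$); $\sigma_i\rho_j=\rho_j\sigma_i$ ($|i-j|\ge 2$); $\rho_i\rho_{i+1}\sigma_i=\sigma_{i+1}\rho_i\rho_{i+1}$ ($1\le i\le n-2$); $\gamma_i^2=1$ and $\gamma_i\gamma_j=\gamma_j\gamma_i$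 (all $i,j$); $\gamma_j\rho_i=\rho_i\gamma_j$ and $\gamma_j\sigma_i=\sigma_i\gamma_j$ for $j\notin\{i,i+1\}$; $\rho_i\gamma_i=\gamma_{i+1}\rho_i$ ($1\le i\le n-1$); $\rho_i\sigma_i\rho_i=\gamma_{i+1}\gamma_i\sigma_i\gamma_i\gamma_{i+1}$ ($1\le i\le n-1$). $\varphi_H:TVB_n\to S_n$ is the homomorphism with $\sigma_i\mapsto e$, $\rho_i\mapsto(i,i+1)$, $\gamma_j\mapsto e$, and $TVH_n=\ker\varphi_H$. In $TVB_n$ define $x_{i,i+1}=\sigma_i$, $x_{i+1,i}=\rho_i\sigma_i\rho_i$ ($1\le i\le n-1$), and for $1\le i<j-1\le n-1$: $x_{ij}=\rho_{j-1}\cdots\rho_{i+1}\sigma_i\rho_{i+1}\cdots\rho_{j-1}$, $x_{ji}=\rho_{j-1}\cdots\rho_{i+1}\rho_i\sigma_i\rho_i\rho_{i+1}\cdots\rho_{j-1}$. *)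

From mathcomp Require Import all_boot.
Set Implicit Arguments. Unset Strict Implicit. Unset Printing Implicit Defensive.

(* A word over a generator type A is a seq of letters (a, b), where    *)
(* b = false means a and b = true means a^{-1}.                        *)
Definition word (A : Type) := seq (A * bool).

Definition winv (A : Type) (w : word A) : word A :=
  rev (map (fun p => (p.1, ~~ p.2)) w).

Definition gw (A : Type) (gs : seq A) : word A := map (fun g => (g, false)) gs.

Inductive pres_eq (A : Type) (R : word A -> word A -> Prop) : word A -> word A -> Prop :=
| pe_refl w : pres_eq R w w
| pe_sym u v : pres_eq R u v -> pres_eq R v u
| pe_trans u v w : pres_eq R u v -> pres_eq R v w -> pres_eq R u w
| pe_free u a b v : pres_eq R (u ++ (a, b) :: (a, ~~ b) :: v) (u ++ v)
| pe_rel u r s v : R r s -> pres_eq R (u ++ r ++ v) (u ++ s ++ v).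

Inductive tvb_gen := Sig of nat | Rho of nat | Gam of nat.

Definition tvb_gen_ok (n : nat) (g : tvb_gen) : bool :=
  match g with
  | Sig i => (1 <= i) && (i <= n - 1)
  | Rho i => (1 <= i) && (i <= n - 1)
  | Gam j => (1 <= j) && (j <= n)
  end.

Definition tvb_word_ok (n : nat) (w : word tvb_gen) : bool :=
  all (fun p => tvb_gen_ok n p.1) w.

Definition far (i j : nat) : Prop := (i + 2 <= j)%N \/ (j + 2 <= i)%N.

Definition tvb_rel (n : nat) (r s : word tvb_gen) : Prop :=
  (exists i, [/\ 1 <= i, i <= n - 2,
      r = gw [:: Sig i; Sig i.+1; Sig i] & s = gw [:: Sig i.+1; Sig i; Sig i.+1]])
  \/ (exists i j, [/\ 1 <= i <= n - 1, 1 <= j <= n - 1, far i j,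
      r = gw [:: Sig i; Sig j] & s = gw [:: Sig j; Sig i]])
  \/ (exists i, [/\ 1 <= i <= n - 1, r = gw [:: Rho i; Rho i] & s = [::]])
  \/ (exists i j, [/\ 1 <= i <= n - 1, 1 <= j <= n - 1, far i j,
      r = gw [:: Rho i; Rho j] & s = gw [:: Rho j; Rho i]])
  \/ (exists i, [/\ 1 <= i, i <= n - 2,
      r = gw [:: Rho i; Rho i.+1; Rho i] & s = gw [:: Rho i.+1; Rho i; Rho i.+1]])
  \/ (exists i j, [/\ 1 <= i <= n - 1, 1 <= j <= n - 1, far i j,
      r = gw [:: Sig i; Rho j] & s = gw [:: Rho j; Sig i]])
  \/ (exists i, [/\ 1 <= i, i <= n - 2,
      r = gw [:: Rho i; Rho i.+1; Sig i] & s = gw [:: Sig i.+1; Rho i; Rho i.+1]])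
  \/ (exists i, [/\ 1 <= i <= n, r = gw [:: Gam i; Gam i] & s = [::]])
  \/ (exists i j, [/\ 1 <= i <= n, 1 <= j <= n,
      r = gw [:: Gam i; Gam j] & s = gw [:: Gam j; Gam i]])
  \/ (exists i j, [/\ 1 <= i <= n - 1, 1 <= j <= n, (j != i) && (j != i.+1),
      r = gw [:: Gam j; Rho i] & s = gw [:: Rho i; Gam j]])
  \/ (exists i j, [/\ 1 <= i <= n - 1, 1 <= j <= n, (j != i) && (j != i.+1),
      r = gw [:: Gam j; Sig i] & s = gw [:: Sig i; Gam j]])
  \/ (exists i, [/\ 1 <= i <= n - 1,
      r = gw [:: Rho i; Gam i] & s = gw [:: Gam i.+1; Rho i]])
  \/ (exists i, [/\ 1 <= i <= n - 1,
      r = gw [:: Rho i; Sig i; Rho i]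
    & s = gw [:: Gam i.+1; Gam i; Sig i; Gam i; Gam i.+1]]).

Definition tvb_eq (n : nat) := pres_eq (tvb_rel n).

(* permutations realised as functions on nat {1..n} (fixing the rest) *)
Definition swap (a b k : nat) : nat := if k == a then b else if k == b then a else k.

Definition phiH_letter (p : tvb_gen * bool) : nat -> nat :=
  match p.1 with
  | Rho i => swap i i.+1
  | _ => id
  end.

Definition phiH (w : word tvb_gen) : nat -> nat :=
  foldr (fun p f => phiH_letter p \o f) id w.

(* w represents an element of TVH_n = ker phi_H *)
Definition in_TVH (n : nat) (w : word tvb_gen) : Prop :=
  forall k, 1 <= k <= n -> phiH w k = k.

Definition rhos_down (i j : nat) : seq tvb_gen :=
  map Rho (rev (iota i.+1 (j - i.+1))).

Definition x_word (k l : nat) : word tvb_gen :=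
  if k < l then
    gw (rhos_down k l ++ Sig k :: rev (rhos_down k l))
  else
    gw (rhos_down l k ++ [:: Rho l; Sig l; Rho l] ++ rev (rhos_down l k)).

Inductive tvh_gen := X of nat & nat | G of nat.

Definition tvh_gen_ok (n : nat) (g : tvh_gen) : bool :=
  match g with
  | X k l => [&& 1 <= k <= n, 1 <= l <= n & k != l]
  | G j => (1 <= j) && (j <= n)
  end.

Definition tvh_word_ok (n : nat) (w : word tvh_gen) : bool :=
  all (fun p => tvh_gen_ok n p.1) w.

Definition in1n (n i : nat) : bool := (1 <= i) && (i <= n).

Definition tvh_rel (n : nat) (r s : word tvh_gen) : Prop :=
  (exists i j k l, [/\ [&& in1n n i, in1n n j, in1n n k & in1n n l],
      uniq [:: i; j; k; l],
      r = gw [:: X i j; X k l] & s = gw [:: X k l; X i j]])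
  \/ (exists i j k, [/\ [&& in1n n i, in1n n j & in1n n k],
      uniq [:: i; j; k],
      r = gw [:: X i k; X k j; X i k] & s = gw [:: X k j; X i k; X k j]])
  \/ (exists i, [/\ in1n n i, r = gw [:: G i; G i] & s = [::]])
  \/ (exists i j, [/\ in1n n i && in1n n j, i != j,
      r = gw [:: G i; G j] & s = gw [:: G j; G i]])
  \/ (exists i j k, [/\ [&& in1n n i, in1n n j & in1n n k],
      uniq [:: i; j; k],
      r = gw [:: X i j; G k] & s = gw [:: G k; X i j]])
  \/ (exists i j, [/\ in1n n i && in1n n j, i != j,
      r = gw [:: X i j] & s = gw [:: G i; G j; X j i; G j; G i]]).

Definition tvh_eq (n : nat) := pres_eq (tvh_rel n).

Definition psi_letter (p : tvh_gen * bool) : word tvb_gen :=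
  let w := match p.1 with X k l => x_word k l | G j => gw [:: Gam j] end in
  if p.2 then winv w else w.

Definition psi (w : word tvh_gen) : word tvb_gen := flatten (map psi_letter w).

From mathcomp Require Import all_boot.
From Stdlib Require Import Setoid Morphisms Lia.
From mathcomp Require Import zify.
Set Implicit Arguments. Unset Strict Implicit. Unset Printing Implicit Defensive.

(* The index-relabelling action of S_n on words in the x_kl, g_j makes the pairs (word of TVH_n,
   permutation) a semidirect product, and s_i |-> (x_(i,i+1), 1), rho_i |-> (1, (i i+1)),
   gamma_j |-> (g_j, 1) respects the relations of TVB_n.  This homomorphism sends the word of
   x_kl's and g_j's to itself, so the relations of TVH_n are complete.  Conversely, since
   rho_m x_kl rho_m = x_(s k, s l) for s = (m m+1), every word of TVB_n can be rewritten as a word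
   in the x_kl, g_j followed by a word in the rho_i; in ker phi_H the latter represents the
   identity permutation and is trivial by the Coxeter presentation of S_n.  Finally, conjugating
   by a suitable word in the rho_i moves the indices of each relation of TVH_n to 1, 2, 3, 4,
   where it becomes a defining relation of TVB_n. *)

Local Notation sg i := (Sig i, false).
Local Notation rh i := (Rho i, false).
Local Notation gm i := (Gam i, false).

(** * Groups given by presentations *)

Global Hint Extern 0 (pres_eq _ _ _) => (simpl; reflexivity) : core.

Section Presentation.
Variables (A : Type) (R : word A -> word A -> Prop).
Local Notation "u ~ v" := (pres_eq R u v) (at level 70).

Lemma pres_eq_ctx u v x y : u ~ v -> x ++ u ++ y ~ x ++ v ++ y.
Proof.
elim=> {u v} [w|u v _ IH|u v w _ IH1 _ IH2|u a b v|u r s v Hr].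
- exact: pe_refl.
- exact: pe_sym.
- exact: pe_trans IH1 IH2.
- by have := pe_free R (x ++ u) a b (v ++ y); rewrite -!catA.
- by have := pe_rel (x ++ u) (v ++ y) Hr; rewrite -!catA.
Qed.

Global Instance pres_eq_equiv : Equivalence (pres_eq R).
Proof. split; [exact: pe_refl | exact: pe_sym | exact: pe_trans]. Qed.

Global Instance cat_pres_eq :
  Proper (pres_eq R ==> pres_eq R ==> pres_eq R) (@cat (A * bool)).
Proof.
move=> u u' Hu v v' Hv; transitivity (u' ++ v).
  exact: (pres_eq_ctx [::] v Hu).
by have := pres_eq_ctx u' [::] Hv; rewrite !cats0.
Qed.

Global Instance cons_pres_eq : Proper (eq ==> pres_eq R ==> pres_eq R) (@cons (A * bool)).
Proof. by move=> a _ <- v v' Hv; have := pres_eq_ctx [:: a] [::] Hv; rewrite !cats0. Qed.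

Lemma pres_eq_cancel a b v : (a, b) :: (a, ~~ b) :: v ~ v.
Proof. exact: (pe_free R [::]). Qed.

Lemma pres_eq_cancelN a b v : (a, ~~ b) :: (a, b) :: v ~ v.
Proof. by have := pres_eq_cancel a (~~ b) v; rewrite negbK. Qed.

Lemma pres_eq_relr r s v : R r s -> r ++ v ~ s ++ v.
Proof. exact: (pe_rel [::] v). Qed.

Lemma pres_eq_rel r s : R r s -> r ~ s.
Proof. by move=> H; have := pres_eq_relr [::] H; rewrite !cats0. Qed.

Lemma winv_cons (p : A * bool) (w : word A) : winv (p :: w) = winv w ++ [:: (p.1, ~~ p.2)].
Proof. by rewrite /winv /= rev_cons cats1. Qed.

Lemma winv_cat (u w : word A) : winv (u ++ w) = winv w ++ winv u.
Proof. by rewrite /winv map_cat rev_cat. Qed.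

Lemma winvK : involutive (@winv A).
Proof.
move=> w; rewrite /winv map_rev revK -map_comp.
by elim: w => //= [[a b] w] ->; rewrite negbK.
Qed.

Lemma cat_winv_cancel w v : w ++ winv w ++ v ~ v.
Proof.
elim: w v => [|[a b] w IH] v; first by [].
by rewrite winv_cons /= -catA /= IH pres_eq_cancel.
Qed.

Lemma winv_cat_cancel w v : winv w ++ w ++ v ~ v.
Proof. by have := cat_winv_cancel (winv w) v; rewrite winvK. Qed.

Lemma pres_eq_winv u v : u ~ v -> winv u ~ winv v.
Proof.
move=> H; transitivity (winv u ++ v ++ winv v).
  by have := cat_winv_cancel v [::]; rewrite cats0 => ->; rewrite cats0.
transitivity (winv u ++ u ++ winv v); first by apply: cat_pres_eq => //; rewrite H.
exact: winv_cat_cancel.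
Qed.

End Presentation.

Definition mapw (A B : Type) (f : A -> B) (w : word A) : word B :=
  map (fun p => (f p.1, p.2)) w.

Lemma pres_eq_map (A B : Type) (R : word A -> word A -> Prop)
    (R' : word B -> word B -> Prop) (f : A -> B) :
  (forall r s, R r s -> R' (mapw f r) (mapw f s)) ->
  forall u v, pres_eq R u v -> pres_eq R' (mapw f u) (mapw f v).
Proof.
move=> HR u v; elim=> {u v} [w|u v _ IH|u v w _ IH1 _ IH2|u a b v|u r s v Hr].
- reflexivity.
- by symmetry.
- by transitivity (mapw f v).
- by rewrite /mapw !map_cat /=; apply: pe_free.
- by rewrite /mapw !map_cat; apply: pe_rel (HR _ _ Hr).
Qed.

(** * Adjacent transpositions *)

Ltac noif t := match t with context [if _ then _ else _] => fail 1 | _ => idtac end.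
Ltac swap_cases := rewrite /swap; repeat (match goal with |- context [?x == ?y] =>
   noif x; noif y; let H := fresh "H" in case: (x =P y) => H; rewrite /= end); try lia.

Lemma swapL a b : swap a b a = b. Proof. by rewrite /swap eqxx. Qed.
Lemma swapR a b : swap a b b = a. Proof. by swap_cases. Qed.
Lemma swapD a b k : k != a -> k != b -> swap a b k = k.
Proof. by rewrite /swap => /negbTE -> /negbTE ->. Qed.
Lemma swapK a b : involutive (swap a b). Proof. by move=> k; swap_cases. Qed.

Ltac swap_simpl := repeat match goal with |- context [swap ?a ?b ?k] =>
  first [rewrite (swapL a b) | rewrite (swapR a b) | rewrite (@swapD a b k); [|lia|lia]] end.

Definition rho_perm (ms : seq nat) : nat -> nat := foldr (fun m f => swap m m.+1 \o f) id ms.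

Lemma rho_perm_cat a b x : rho_perm (a ++ b) x = rho_perm a (rho_perm b x).
Proof. by elim: a => //= m a ->. Qed.

Lemma rho_perm_revK ms x : rho_perm ms (rho_perm (rev ms) x) = x.
Proof. by elim: ms x => //= m ms IH x; rewrite rev_cons -cats1 rho_perm_cat /= IH swapK. Qed.

Lemma rho_permK ms x : rho_perm (rev ms) (rho_perm ms x) = x.
Proof. by have := rho_perm_revK (rev ms) x; rewrite revK. Qed.

Lemma rho_perm_inj ms : injective (rho_perm ms).
Proof. by move=> x y H; rewrite -(rho_permK ms x) H rho_permK. Qed.

Lemma rho_perm_id ms x : all (fun m => (x != m) && (x != m.+1)) ms -> rho_perm ms x = x.
Proof. by elim: ms => //= m ms IH /andP [/andP [h1 h2] /IH ->]; rewrite swapD. Qed.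

Lemma rho_perm_iota_up p q : rho_perm (rev (iota p q)) p = p + q.
Proof.
elim: q => [|q IH]; first by rewrite addn0.
by rewrite -addn1 iotaD rev_cat /= IH swapL; lia.
Qed.

Lemma rho_perm_iota_down p q : rho_perm (iota p q) (p + q) = p.
Proof. by elim: q p => [|q IH] p /=; rewrite ?addn0 // -addSnnS IH swapR. Qed.

Lemma phiH_cat a b x : phiH (a ++ b) x = phiH a (phiH b x).
Proof. by elim: a => //= p a ->. Qed.

Definition gwb (A : Type) (b : bool) (gs : seq A) : word A := map (fun g => (g, b)) gs.

Lemma phiH_rhos b ms : phiH (gwb b (map Rho ms)) = rho_perm ms.
Proof. by elim: ms => //= m ms ->. Qed.

Definition rho_ok n i := (1 <= i) && (i <= n - 1).

Definition range_perm n (f : nat -> nat) :=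
  (forall k, in1n n k -> in1n n (f k)) /\
  (forall a b, in1n n a -> in1n n b -> f a = f b -> a = b).

Lemma range_perm_id n : range_perm n id. Proof. by []. Qed.

Lemma range_perm_comp n f g : range_perm n f -> range_perm n g -> range_perm n (f \o g).
Proof.
move=> [f1 f2] [g1 g2]; split=> [k hk|a b ha hb /= e]; first by apply/f1/g1.
by apply: g2 => //; apply: f2 => //; apply: g1.
Qed.

Lemma range_perm_swap n i : rho_ok n i -> range_perm n (swap i i.+1).
Proof.
rewrite /rho_ok => hi; split=> [k|a b]; rewrite /in1n; first by move=> hk; swap_cases.
by move=> ha hb e; rewrite -(swapK i i.+1 a) e swapK.
Qed.

Lemma range_perm_rho n ms : all (rho_ok n) ms -> range_perm n (rho_perm ms).
Proof.
elim: ms => [|m ms IH] /=; first by move=> _; apply: range_perm_id.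
by move=> /andP [hm /IH]; apply: range_perm_comp (range_perm_swap hm).
Qed.

Lemma uniq_range_perm n f (s : seq nat) :
  range_perm n f -> all (in1n n) s -> uniq s -> uniq (map f s).
Proof.
move=> [_ hf] ha hu; rewrite map_inj_in_uniq // => x y hx hy.
by apply: hf; apply: (allP ha).
Qed.

(** * Relabelling the generators of TVH_n *)

Definition relabel_gen (f : nat -> nat) (g : tvh_gen) : tvh_gen :=
  match g with X k l => X (f k) (f l) | G j => G (f j) end.

Definition relabel f (u : word tvh_gen) := mapw (relabel_gen f) u.

Lemma relabel_cat f u v : relabel f (u ++ v) = relabel f u ++ relabel f v.
Proof. exact: map_cat. Qed.

Lemma relabel_comp f g u : relabel f (relabel g u) = relabel (f \o g) u.
Proof. by rewrite /relabel /mapw -map_comp; apply: eq_map => [[[k l|j] b]]. Qed.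

Lemma relabel_id u : relabel id u = u.
Proof. by elim: u => //= [[[k l|j] b] u] ->. Qed.

Lemma eq_relabel f g u : f =1 g -> relabel f u = relabel g u.
Proof. by move=> H; apply: eq_map => [[[k l|j] b]] /=; rewrite !H. Qed.

Lemma tvh_word_ok_relabel n f u :
  range_perm n f -> tvh_word_ok n u -> tvh_word_ok n (relabel f u).
Proof.
move=> [f1 f2]; elim: u => //= [[[k l|j] b] u IH] /= /andP [hp /IH ->]; rewrite andbT.
  move: hp => /and3P [hk hl ne].
  have /andP [-> ->] := f1 _ hk; have /andP [-> ->] := f1 _ hl.
  by apply/eqP => /f2 e; move/eqP: ne; apply; apply: e.
exact: f1.
Qed.

Lemma tvh_rel_relabel n f r s :
  range_perm n f -> tvh_rel n r s -> tvh_rel n (relabel f r) (relabel f s).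
Proof.
move=> pf; have [f1 _] := pf; have U := uniq_range_perm pf.
case=> [[i [j [k [l [h u -> ->]]]]]|[[i [j [k [h u -> ->]]]]|[[i [h -> ->]]|
        [[i [j [h u -> ->]]]|[[i [j [k [h u -> ->]]]]|[i [j [h u -> ->]]]]]]]].
- left; exists (f i), (f j), (f k), (f l); split => //.
  + by move: h => /and4P [hi hj hk hl]; rewrite !f1.
  + by apply: (U [:: i; j; k; l]) => //=; move: h => /and4P [-> -> -> ->].
- right; left; exists (f i), (f j), (f k); split => //.
  + by move: h => /and3P [hi hj hk]; rewrite !f1.
  + by apply: (U [:: i; j; k]) => //=; move: h => /and3P [-> -> ->].
- by right; right; left; exists (f i); split => //; apply: f1.
- right; right; right; left; exists (f i), (f j); move: h => /andP [hi hj]; split => //.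
  + by rewrite !f1.
  + by have := U [:: i; j]; rewrite /= !andbT !inE; apply => //=; rewrite hi hj.
- right; right; right; right; left; exists (f i), (f j), (f k); split => //.
  + by move: h => /and3P [hi hj hk]; rewrite !f1.
  + by apply: (U [:: i; j; k]) => //=; move: h => /and3P [-> -> ->].
- right; right; right; right; right; exists (f i), (f j); move: h => /andP [hi hj].
  split => //; first by rewrite !f1.
  by have := U [:: i; j]; rewrite /= !andbT !inE; apply => //=; rewrite hi hj.
Qed.

Lemma tvh_eq_relabel n f u v :
  range_perm n f -> tvh_eq n u v -> tvh_eq n (relabel f u) (relabel f v).
Proof. by move=> pf; apply: pres_eq_map => r s; apply: tvh_rel_relabel. Qed.

(** * The semidirect product TVH_n x| S_n *)

(* The semidirect product TVH_n x| S_n, its elements written as pairs (word, permutation);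
   [sd_word] is the homomorphism TVB_n -> TVH_n x| S_n. *)
Definition sdmul (a b : word tvh_gen * (nat -> nat)) : word tvh_gen * (nat -> nat) :=
  (a.1 ++ relabel a.2 b.1, a.2 \o b.2).

Lemma sdmulA a b c : sdmul a (sdmul b c) = sdmul (sdmul a b) c.
Proof. by rewrite /sdmul /= relabel_cat relabel_comp catA. Qed.

Lemma sdmul1 a : sdmul ([::], id) a = a.
Proof. by case: a => u f; rewrite /sdmul /= relabel_id. Qed.

Definition sd_letter n (p : tvb_gen * bool) : word tvh_gen * (nat -> nat) :=
  if tvb_gen_ok n p.1 then
    match p.1 with
    | Sig i => ([:: (X i i.+1, p.2)], id)
    | Rho i => ([::], swap i i.+1)
    | Gam j => ([:: (G j, p.2)], id)
    end
  else ([::], id).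

Definition sd_word n (w : word tvb_gen) :=
  foldr (fun p acc => sdmul (sd_letter n p) acc) ([::], id) w.

Lemma sd_word_cat n u v : sd_word n (u ++ v) = sdmul (sd_word n u) (sd_word n v).
Proof. by elim: u => [|p u IH] /=; rewrite ?sdmul1 // IH sdmulA. Qed.

Lemma range_perm_sd_word n w : range_perm n (sd_word n w).2.
Proof.
elim: w => [|p w IH] /=; first exact: range_perm_id.
apply: range_perm_comp IH; rewrite /sd_letter.
by case: p => [[i|i|j] b] /=; case: ifP => h //=; apply: range_perm_swap.
Qed.

Definition sd_equiv n (a b : word tvh_gen * (nat -> nat)) := tvh_eq n a.1 b.1 /\ a.2 =1 b.2.

Lemma sd_equiv_sym n a b : sd_equiv n a b -> sd_equiv n b a.
Proof. by case=> h1 h2; split=> [|x]; rewrite ?h2 //; symmetry. Qed.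

Lemma sd_equiv_trans n a b c : sd_equiv n a b -> sd_equiv n b c -> sd_equiv n a c.
Proof. by case=> h1 h2 [h3 h4]; split=> [|x]; [transitivity b.1 | rewrite h2 h4]. Qed.

Lemma sd_equiv_mull n c a b :
  range_perm n c.2 -> sd_equiv n a b -> sd_equiv n (sdmul c a) (sdmul c b).
Proof.
move=> pc [h1 h2]; split=> [|x] /=; last by rewrite h2.
by apply: cat_pres_eq => //; apply: tvh_eq_relabel.
Qed.

Lemma sd_equiv_mulr n a b c : sd_equiv n a b -> sd_equiv n (sdmul a c) (sdmul b c).
Proof.
move=> [h1 h2]; split=> [|x] /=; last by rewrite h2.
by rewrite (eq_relabel _ h2); apply: cat_pres_eq.
Qed.

Lemma sd_equiv_cancel n a b :
  sd_equiv n (sdmul (sd_letter n (a, b)) (sd_letter n (a, ~~ b))) ([::], id).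
Proof.
rewrite /sd_letter /=; case: a => [i|i|j] /=; case: ifP => _ /=; split => //=;
  by [move=> x /=; rewrite ?swapK | apply: (pres_eq_cancel _ _ _ [::])].
Qed.

Ltac if_true := repeat (rewrite ifT; last by lia).

Lemma sd_equiv_rel n r s : tvb_rel n r s -> sd_equiv n (sd_word n r) (sd_word n s).
Proof.
case=> [H|[H|[H|[H|[H|[H|[H|[H|[H|[H|[H|[H|H]]]]]]]]]]]].
- case: H => i [h1 h2 -> ->]; rewrite /sd_word /sd_letter /=; if_true; split => //=.
  apply: pres_eq_rel; right; left; exists i, i.+2, i.+1.
  by split => //; rewrite /in1n /= ?inE; lia.
- case: H => i [j [h1 h2 hf -> ->]]; rewrite /sd_word /sd_letter /=; if_true; split => //=.
  apply: pres_eq_rel; left; exists i, i.+1, j, j.+1.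
  by split => //; rewrite /in1n /= ?inE; move: hf; rewrite /far; lia.
- case: H => i [h1 -> ->]; rewrite /sd_word /sd_letter /=; if_true; split => //= x /=.
  by rewrite swapK.
- case: H => i [j [h1 h2 hf -> ->]]; rewrite /sd_word /sd_letter /=; if_true; split => //= x /=.
  by move: hf; rewrite /far; swap_cases.
- case: H => i [h1 h2 -> ->]; rewrite /sd_word /sd_letter /=; if_true; split => //= x /=.
  by swap_cases.
- case: H => i [j [h1 h2 hf -> ->]]; rewrite /sd_word /sd_letter /=; if_true; split => //=.
  by move: hf; rewrite /far => hf; swap_simpl.
- case: H => i [h1 h2 -> ->]; rewrite /sd_word /sd_letter /=; if_true; split => //=;
    by [swap_simpl | move=> x /=; swap_cases].
- case: H => i [h1 -> ->]; rewrite /sd_word /sd_letter /=; if_true; split => //=.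
  by apply: pres_eq_rel; right; right; left; exists i.
- case: H => i [j [h1 h2 -> ->]]; rewrite /sd_word /sd_letter /=; if_true; split => //=.
  case: (i =P j) => [-> //|/eqP ne].
  by apply: pres_eq_rel; do 3 right; left; exists i, j; split => //; rewrite /in1n; lia.
- case: H => i [j [h1 h2 hj -> ->]]; rewrite /sd_word /sd_letter /=; if_true; split => //=.
  by swap_simpl.
- case: H => i [j [h1 h2 hj -> ->]]; rewrite /sd_word /sd_letter /=; if_true; split => //=.
  symmetry; apply: pres_eq_rel; do 4 right; left; exists i, i.+1, j.
  by split => //; rewrite /in1n /= ?inE; lia.
- case: H => i [h1 -> ->]; rewrite /sd_word /sd_letter /=; if_true; split => //=.
  by swap_simpl.
- case: H => i [h1 -> ->]; rewrite /sd_word /sd_letter /=; if_true; split => //=; last first.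
    by move=> x /=; rewrite swapK.
  swap_simpl; apply: pres_eq_rel; do 5 right; exists i.+1, i.
  by split => //; rewrite /in1n; lia.
Qed.

Lemma sd_word_pres n w w' : tvb_eq n w w' -> sd_equiv n (sd_word n w) (sd_word n w').
Proof.
elim=> {w w'} [w|u v _ IH|u v w _ IH1 _ IH2|u a b v|u r s v Hr].
- by split.
- exact: sd_equiv_sym.
- exact: sd_equiv_trans IH1 IH2.
- rewrite !sd_word_cat /=; apply: sd_equiv_mull; first exact: range_perm_sd_word.
  by rewrite sdmulA -[X in sd_equiv n _ X]sdmul1; apply/sd_equiv_mulr/sd_equiv_cancel.
- rewrite !sd_word_cat; apply: sd_equiv_mull; first exact: range_perm_sd_word.
  by apply/sd_equiv_mulr/sd_equiv_rel.
Qed.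

Lemma sd_word_phiH n w : tvb_word_ok n w -> (sd_word n w).2 =1 phiH w.
Proof.
elim: w => //= [[g b] w IH] /andP [hg /IH {}IH] x /=.
by rewrite IH /sd_letter /= hg; case: g hg.
Qed.

Lemma phiH_pres n w w' :
  tvb_word_ok n w -> tvb_word_ok n w' -> tvb_eq n w w' -> phiH w =1 phiH w'.
Proof.
move=> h h' /sd_word_pres [_ H2] x.
by rewrite -(sd_word_phiH h) H2 (sd_word_phiH h').
Qed.

(** * The words x_kl *)

(* x_kl = rho_w sigma_(min k l) rho_w^-1, where rho_w is the product of the rho_m for m in
   [x_rhos k l]. *)
Definition x_rhos (k l : nat) : seq nat :=
  if k < l then rev (iota k.+1 (l - k.+1)) else rcons (rev (iota l.+1 (k - l.+1))) l.

Definition x_seq (k l : nat) : seq tvb_gen :=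
  map Rho (x_rhos k l) ++ Sig (minn k l) :: map Rho (rev (x_rhos k l)).

Lemma x_word_eq k l : x_word k l = gw (x_seq k l).
Proof.
rewrite /x_word /x_seq /x_rhos /rhos_down; case: ltnP => h; first by rewrite !map_rev !revK.
by rewrite rev_rcons map_rcons -cats1 -catA /= !map_rev !revK.
Qed.

Lemma rev_x_seq k l : rev (x_seq k l) = x_seq k l.
Proof. by rewrite /x_seq rev_cat rev_cons -map_rev revK -cats1 -catA map_rev. Qed.

Lemma winv_gwb (A : Type) b (s : seq A) : winv (gwb b s) = gwb (~~ b) (rev s).
Proof. by rewrite /winv /gwb -map_comp map_rev. Qed.

Lemma gw_cat (A : Type) (a b : seq A) : gw (a ++ b) = gw a ++ gw b.
Proof. exact: map_cat. Qed.

Definition gen_seq (g : tvh_gen) : seq tvb_gen :=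
  match g with X k l => x_seq k l | G j => [:: Gam j] end.

Lemma psi_letterE p : psi_letter p = gwb p.2 (gen_seq p.1).
Proof.
case: p => [[k l|j] [|]]; rewrite /psi_letter /= ?x_word_eq //.
by have := winv_gwb false (x_seq k l); rewrite rev_x_seq.
Qed.

Lemma psi_cons p u : psi (p :: u) = psi_letter p ++ psi u.
Proof. by []. Qed.

Lemma psi_cat u v : psi (u ++ v) = psi u ++ psi v.
Proof. by rewrite /psi map_cat flatten_cat. Qed.

Lemma x_rhos_ok n k l : in1n n k -> in1n n l -> k != l -> all (rho_ok n) (x_rhos k l).
Proof.
rewrite /in1n /x_rhos => hk hl ne; case: ltnP => h; apply/allP => x.
  by rewrite mem_rev mem_iota /rho_ok; lia.
by rewrite mem_rcons inE mem_rev mem_iota /rho_ok; lia.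
Qed.

Lemma rho_perm_x_rhos k l : k != l ->
  rho_perm (x_rhos k l) (minn k l) = k /\ rho_perm (x_rhos k l) (minn k l).+1 = l.
Proof.
have fix_lo p q x : x < p -> rho_perm (rev (iota p q)) x = x.
  by move=> h; apply: rho_perm_id; apply/allP => y; rewrite mem_rev mem_iota; lia.
rewrite /x_rhos => ne; case: ltnP => h.
  by rewrite rho_perm_iota_up fix_lo //; split => //; lia.
by rewrite -cats1 !rho_perm_cat /= swapL swapR rho_perm_iota_up fix_lo //; split => //; lia.
Qed.

Lemma phiH_psi u x : phiH (psi u) x = x.
Proof.
elim: u x => //= [[g b] u IH] x; rewrite phiH_cat psi_letterE IH.
case: g => [k l|j] //=; rewrite /x_seq /gwb map_cat phiH_cat /=.
by rewrite -/(gwb b _) phiH_rhos -/(gwb b _) phiH_rhos rho_perm_revK.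
Qed.

Lemma sd_word_rhos n b ms :
  all (rho_ok n) ms -> sd_word n (gwb b (map Rho ms)) = ([::], rho_perm ms).
Proof.
by elim: ms => //= m ms IH /andP [hm /IH ->]; move: hm; rewrite /sd_letter /rho_ok /= => ->.
Qed.

Lemma sd_word_psi_letter n p : tvh_gen_ok n p.1 ->
  (sd_word n (psi_letter p)).1 = [:: p] /\ (sd_word n (psi_letter p)).2 =1 id.
Proof.
rewrite psi_letterE; case: p => [[k l|j] b] /=; last by rewrite /sd_letter /= => ->.
move=> /and3P [hk hl ne]; have R := x_rhos_ok hk hl ne; have [e1 e2] := rho_perm_x_rhos ne.
rewrite /x_seq /gwb map_cat sd_word_cat /= -/(gwb b _) sd_word_rhos //.
rewrite -/(gwb b _) sd_word_rhos ?all_rev // /sd_letter /=.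
have -> : (1 <= minn k l) && (minn k l <= n - 1) by move: hk hl ne; rewrite /in1n; lia.
by rewrite /= e1 e2; split => // x /=; apply: rho_perm_revK.
Qed.

Lemma sd_word_psi n u : tvh_word_ok n u ->
  (sd_word n (psi u)).1 = u /\ (sd_word n (psi u)).2 =1 id.
Proof.
elim: u => //= p u IH /andP [/sd_word_psi_letter [e1 e2] /IH [IH1 IH2]].
rewrite sd_word_cat /sdmul /= e1 IH1 (eq_relabel _ e2) relabel_id.
by split => // x /=; rewrite e2 IH2.
Qed.

Lemma tvh_eq_of_tvb_eq n u v : tvh_word_ok n u -> tvh_word_ok n v ->
  tvb_eq n (psi u) (psi v) -> tvh_eq n u v.
Proof.
by move=> hu hv /sd_word_pres [H _]; rewrite (sd_word_psi hu).1 (sd_word_psi hv).1 in H.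
Qed.

Lemma tvb_word_ok_rhos n ms : all (rho_ok n) ms -> tvb_word_ok n (gw (map Rho ms)).
Proof. by elim: ms => //= m ms IH /andP [hm /IH ->]; rewrite andbT. Qed.

Lemma tvb_word_ok_psi n u : tvh_word_ok n u -> tvb_word_ok n (psi u).
Proof.
elim: u => //= p u IH /andP [hp /IH].
rewrite psi_cons /tvb_word_ok all_cat => ->; rewrite andbT psi_letterE.
case: p hp => [[k l|j] b] /=; last by rewrite andbT.
move=> /and3P [hk hl ne]; have R := x_rhos_ok hk hl ne.
rewrite /x_seq /gwb map_cat all_cat /= !all_map.
apply/and3P; split; first by apply/allP => x /(allP R).
  by move: hk hl ne; rewrite /in1n; lia.
by apply/allP => x; rewrite mem_rev => /(allP R).
Qed.

Definition farb i m := (i + 2 <= m) || (m + 2 <= i).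

Lemma x_rhos_S k l : k < l -> x_rhos k l.+1 = l :: x_rhos k l.
Proof.
move=> h; rewrite /x_rhos ltnS (ltnW h) h.
have -> : l.+1 - k.+1 = (l - k.+1) + 1 by lia.
by rewrite iotaD rev_cat /=; congr (_ :: _); lia.
Qed.

Lemma x_rhos_Sl k l : l < k -> x_rhos k.+1 l = k :: x_rhos k l.
Proof.
move=> h; rewrite /x_rhos ifF; last by lia.
rewrite ifF; last by lia.
have -> : k.+1 - l.+1 = (k - l.+1) + 1 by lia.
by rewrite iotaD rev_cat /=; congr (rcons (_ :: _) _); lia.
Qed.

Lemma x_word_S k l : k < l -> x_word k l.+1 = rh l :: x_word k l ++ [:: rh l].
Proof.
move=> h; rewrite !x_word_eq /x_seq x_rhos_S //= rev_cons map_rcons -cats1.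
have -> : minn k l.+1 = minn k l by lia.
by rewrite /gw !map_cat /= !map_cat -!catA.
Qed.

Lemma x_word_Sl k l : l < k -> x_word k.+1 l = rh k :: x_word k l ++ [:: rh k].
Proof.
move=> h; rewrite !x_word_eq /x_seq x_rhos_Sl //= rev_cons map_rcons -cats1.
have -> : minn k.+1 l = minn k l by lia.
by rewrite /gw !map_cat /= !map_cat -!catA.
Qed.

Lemma x_seq_12 k : x_seq k k.+1 = [:: Sig k].
Proof. by rewrite /x_seq /x_rhos ltnSn subnn /= (_ : minn k k.+1 = k) //; lia. Qed.

Lemma x_word_12 k : x_word k k.+1 = [:: sg k].
Proof. by rewrite x_word_eq x_seq_12. Qed.

Lemma x_word_21 k : x_word k.+1 k = [:: rh k; sg k; rh k].
Proof.
by rewrite x_word_eq /x_seq /x_rhos ltnNge leqnSn /= subnn /= (_ : minn k.+1 k = k) //; lia.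
Qed.

Definition far_letter n m (g : tvb_gen) :=
  match g with Sig i | Rho i => rho_ok n i && farb m i | Gam _ => false end.

Lemma far_letter_x_seq n m k l :
  (forall x, x \in x_rhos k l -> rho_ok n x && farb m x) ->
  rho_ok n (minn k l) && farb m (minn k l) -> all (far_letter n m) (x_seq k l).
Proof.
move=> H1 H2; rewrite /x_seq all_cat /= !all_map H2 /=.
by apply/andP; split; apply/allP => x hx /=; apply: H1; rewrite // -mem_rev.
Qed.

Section TVBRelations.
Variable n : nat.
Local Notation "u ~ v" := (tvb_eq n u v) (at level 70).
Local Notation rho_ok := (rho_ok n).

Lemma tvb_relr r s v : tvb_rel n r s -> r ++ v ~ s ++ v.
Proof. exact: pres_eq_relr. Qed.

Lemma rho_sq i v : rho_ok i -> rh i :: rh i :: v ~ v.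
Proof.
by move=> h; apply: (tvb_relr (r := [:: rh i; rh i]) (s := [::])); do 2 right; left; exists i.
Qed.

Lemma rhoV i v : rho_ok i -> (Rho i, true) :: v ~ rh i :: v.
Proof.
move=> h; transitivity ((Rho i, true) :: rh i :: rh i :: v); first by rewrite rho_sq.
exact: (pres_eq_cancelN _ (Rho i) false).
Qed.

Lemma gam_sq j v : in1n n j -> gm j :: gm j :: v ~ v.
Proof.
by move=> h; apply: (tvb_relr (r := [:: gm j; gm j]) (s := [::])); do 7 right; left; exists j.
Qed.

Lemma gamV j v : in1n n j -> (Gam j, true) :: v ~ gm j :: v.
Proof.
move=> h; transitivity ((Gam j, true) :: gm j :: gm j :: v); first by rewrite gam_sq.
exact: (pres_eq_cancelN _ (Gam j) false).
Qed.

Lemma gam_comm i j v : in1n n i -> in1n n j -> gm i :: gm j :: v ~ gm j :: gm i :: v.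
Proof.
move=> hi hj; apply: (tvb_relr (r := [:: gm i; gm j]) (s := [:: gm j; gm i])).
by do 8 right; left; exists i, j.
Qed.

Lemma rho_far_comm i j v :
  rho_ok i -> rho_ok j -> farb i j -> rh i :: rh j :: v ~ rh j :: rh i :: v.
Proof.
move=> hi hj hf; apply: (tvb_relr (r := [:: rh i; rh j]) (s := [:: rh j; rh i])).
by do 3 right; left; exists i, j; split => //; move: hf; rewrite /far /farb; lia.
Qed.

Lemma rho_braid i v : 1 <= i -> i <= n - 2 ->
  rh i :: rh i.+1 :: rh i :: v ~ rh i.+1 :: rh i :: rh i.+1 :: v.
Proof.
move=> h1 h2; apply: (tvb_relr (r := [:: rh i; rh i.+1; rh i]) (s := [:: rh i.+1; rh i; rh i.+1])).
by do 4 right; left; exists i.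
Qed.

Lemma sig_braid i v : 1 <= i -> i <= n - 2 ->
  sg i :: sg i.+1 :: sg i :: v ~ sg i.+1 :: sg i :: sg i.+1 :: v.
Proof.
move=> h1 h2; apply: (tvb_relr (r := [:: sg i; sg i.+1; sg i]) (s := [:: sg i.+1; sg i; sg i.+1])).
by left; exists i.
Qed.

Lemma sig_far_comm i j v :
  rho_ok i -> rho_ok j -> farb i j -> sg i :: sg j :: v ~ sg j :: sg i :: v.
Proof.
move=> hi hj hf; apply: (tvb_relr (r := [:: sg i; sg j]) (s := [:: sg j; sg i])).
by right; left; exists i, j; split => //; move: hf; rewrite /far /farb; lia.
Qed.

Lemma sig_rho_far_comm i j v :
  rho_ok i -> rho_ok j -> farb i j -> sg i :: rh j :: v ~ rh j :: sg i :: v.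
Proof.
move=> hi hj hf; apply: (tvb_relr (r := [:: sg i; rh j]) (s := [:: rh j; sg i])).
by do 5 right; left; exists i, j; split => //; move: hf; rewrite /far /farb; lia.
Qed.

Lemma rho_rho_sig i v : 1 <= i -> i <= n - 2 ->
  rh i :: rh i.+1 :: sg i :: v ~ sg i.+1 :: rh i :: rh i.+1 :: v.
Proof.
move=> h1 h2; apply: (tvb_relr (r := [:: rh i; rh i.+1; sg i]) (s := [:: sg i.+1; rh i; rh i.+1])).
by do 6 right; left; exists i.
Qed.

Lemma gam_rho_comm j i v : rho_ok i -> in1n n j -> (j != i) && (j != i.+1) ->
  gm j :: rh i :: v ~ rh i :: gm j :: v.
Proof.
move=> hi hj hji; apply: (tvb_relr (r := [:: gm j; rh i]) (s := [:: rh i; gm j])).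
by do 9 right; left; exists i, j.
Qed.

Lemma gam_sig_comm j i v : rho_ok i -> in1n n j -> (j != i) && (j != i.+1) ->
  gm j :: sg i :: v ~ sg i :: gm j :: v.
Proof.
move=> hi hj hji; apply: (tvb_relr (r := [:: gm j; sg i]) (s := [:: sg i; gm j])).
by do 10 right; left; exists i, j.
Qed.

Lemma rho_gam i v : rho_ok i -> rh i :: gm i :: v ~ gm i.+1 :: rh i :: v.
Proof.
move=> hi; apply: (tvb_relr (r := [:: rh i; gm i]) (s := [:: gm i.+1; rh i])).
by do 11 right; left; exists i.
Qed.

Lemma rho_sig_rho i v : rho_ok i ->
  rh i :: sg i :: rh i :: v ~ gm i.+1 :: gm i :: sg i :: gm i :: gm i.+1 :: v.
Proof.
move=> hi; apply: (tvb_relr (r := [:: rh i; sg i; rh i])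
                            (s := [:: gm i.+1; gm i; sg i; gm i; gm i.+1])).
by do 12 right; exists i.
Qed.

End TVBRelations.

(** * Conjugating x_kl by rho_m *)

Section Conjugation.
Variable n : nat.
Local Notation "u ~ v" := (tvb_eq n u v) (at level 70).
Local Notation rho_ok := (rho_ok n).

Lemma rho_gam_conj m j v : rho_ok m -> in1n n j ->
  rh m :: gm j :: v ~ gm (swap m m.+1 j) :: rh m :: v.
Proof.
move=> hm hj; case: (j =P m) => [->|ne1]; first by rewrite swapL rho_gam.
case: (j =P m.+1) => [->|ne2].
  rewrite swapR; symmetry.
  transitivity (rh m :: rh m :: gm m :: rh m :: v); first by rewrite rho_sq.
  by rewrite rho_gam // rho_sq.
rewrite swapD; [|exact/eqP|exact/eqP].
by symmetry; apply: gam_rho_comm => //; apply/andP; split; apply/eqP.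
Qed.

Lemma gam_rho_conj m j v : rho_ok m -> in1n n j ->
  gm j :: rh m :: v ~ rh m :: gm (swap m m.+1 j) :: v.
Proof.
move=> hm hj; have hj' := (range_perm_swap hm).1 _ hj.
by rewrite rho_gam_conj // swapK.
Qed.

Lemma rho_far_letters_comm m L v : rho_ok m -> all (far_letter n m) L ->
  rh m :: gw L ++ v ~ gw L ++ rh m :: v.
Proof.
move=> hm; elim: L => [_|g L IH]; first by [].
move=> /andP [hg hL] /=; rewrite -IH //.
case: g hg => [i|i|j] //= /andP [hi hf].
  by symmetry; apply: sig_rho_far_comm => //; move: hf; rewrite /farb; lia.
exact: rho_far_comm.
Qed.

Lemma conj_x_far m k l v : rho_ok m -> 1 <= k -> k < l -> l <= n ->
  (m.+2 <= k) || (l.+1 <= m) -> rh m :: x_word k l ++ rh m :: v ~ x_word k l ++ v.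
Proof.
move=> hm hk hkl hl hf; rewrite x_word_eq rho_far_letters_comm ?rho_sq //.
apply: far_letter_x_seq; last first.
  by rewrite (_ : minn k l = k); move: hm hf; rewrite /rho_ok /farb; lia.
move=> x; rewrite /x_rhos hkl mem_rev mem_iota => hx.
by move: hm hf; rewrite /rho_ok /farb; lia.
Qed.

Lemma conj_x_inner m k l v : 1 <= k -> k < m -> m.+1 < l -> l <= n ->
  rh m :: x_word k l ++ rh m :: v ~ x_word k l ++ v.
Proof.
move=> h1 h2; elim: l v => // l IH v h3 h4.
have hm : rho_ok m by rewrite /rho_ok; lia.
have hm1 : rho_ok m.+1 by rewrite /rho_ok; lia.
case: (ltnP m.+1 l) => h5; last first.
  have -> : l = m.+1 by lia.
  rewrite x_word_S; last by lia.
  rewrite x_word_S; last by lia.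
  rewrite /= -!catA /= rho_braid; try lia.
  rewrite x_word_eq rho_far_letters_comm //; last first.
    apply: far_letter_x_seq; last by rewrite (_ : minn k m = k); rewrite /rho_ok /farb; lia.
    by move=> x; rewrite /x_rhos h2 mem_rev mem_iota /rho_ok /farb; lia.
  by rewrite -rho_braid ?rho_sq //; lia.
have hl : rho_ok l by rewrite /rho_ok; lia.
rewrite x_word_S; last by lia.
rewrite /= -!catA /= rho_far_comm //; last by rewrite /farb; lia.
by rewrite (@rho_far_comm n l m v) ?IH //; rewrite /farb; lia.
Qed.

Lemma conj_x_top m k v : rho_ok m -> k < m ->
  rh m :: x_word k m.+1 ++ rh m :: v ~ x_word k m ++ v.
Proof. by move=> hm h; rewrite x_word_S // /= -catA /= !rho_sq. Qed.

Lemma conj_x_bottom k l v : 1 <= k -> k.+2 <= l -> l <= n ->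
  rh k :: x_word k l ++ rh k :: v ~ x_word k.+1 l ++ v.
Proof.
move=> h1; elim: l v => // l IH v h2 h3.
case: (ltnP l k.+2) => h4.
  have -> : l = k.+1 by lia.
  rewrite x_word_S // !x_word_12 /= rho_rho_sig; try lia.
  by rewrite !rho_sq //; rewrite /rho_ok; lia.
have hk : rho_ok k by rewrite /rho_ok; lia.
have hl : rho_ok l by rewrite /rho_ok; lia.
rewrite x_word_S; last by lia.
rewrite x_word_S; last by lia.
rewrite /= -!catA /= rho_far_comm //; last by rewrite /farb; lia.
by rewrite (@rho_far_comm n l k v) ?IH //; rewrite /farb; lia.
Qed.

Lemma conj_x_bottomV j l v : 1 <= j -> j.+1 < l -> l <= n ->
  rh j :: x_word j.+1 l ++ rh j :: v ~ x_word j l ++ v.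
Proof.
move=> h1 h2 h3; have hj : rho_ok j by rewrite /rho_ok; lia.
transitivity (rh j :: rh j :: x_word j l ++ rh j :: rh j :: v); last by rewrite !rho_sq.
by rewrite conj_x_bottom.
Qed.

Lemma conj_x_lt m k l v : rho_ok m -> in1n n k -> in1n n l -> k < l ->
  rh m :: x_word k l ++ rh m :: v ~ x_word (swap m m.+1 k) (swap m m.+1 l) ++ v.
Proof.
move=> hm hk hl hkl; move: (hm) (hk) (hl); rewrite /rho_ok /in1n => hm' hk' hl'.
case H1: ((m.+2 <= k) || (l.+1 <= m)).
  by rewrite conj_x_far // ?swapD //; try lia; apply/eqP; lia.
case: (m.+1 =P k) => [ek|nek].
  subst k; rewrite swapR (@swapD m m.+1 l); try (apply/eqP; lia).
  by apply: conj_x_bottomV; lia.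
case: (m =P k) => [ek|nek'].
  subst k; rewrite swapL; case: (l =P m.+1) => [->|nel].
    by rewrite swapR x_word_12 x_word_21.
  by rewrite swapD; try (apply/eqP; lia); apply: conj_x_bottom; lia.
case: (ltnP m.+1 l) => h4.
  by rewrite conj_x_inner ?swapD //; try (apply/eqP; lia); lia.
case: (m.+1 =P l) => [el|nel].
  subst l; rewrite swapR swapD; try (apply/eqP; lia).
  by apply: conj_x_top => //; lia.
have -> : l = m by lia.
by rewrite swapL swapD; try (apply/eqP; lia); rewrite x_word_S /= -?catA //; lia.
Qed.

Lemma x_word_gam k l v : 1 <= k -> k < l -> l <= n ->
  x_word l k ++ v ~ gm l :: gm k :: x_word k l ++ gm k :: gm l :: v.
Proof.
move=> h1; elim: l v => // l IH v h2 h3.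
case: (ltnP k l) => h4; last first.
  have -> : l = k by lia.
  by rewrite x_word_21 x_word_12 /=; apply: rho_sig_rho; rewrite /rho_ok; lia.
rewrite x_word_Sl // x_word_S // /= -!catA /= IH //; last by lia.
have hl : rho_ok l by rewrite /rho_ok; lia.
have hl' : in1n n l by rewrite /in1n; lia.
have hk' : in1n n k by rewrite /in1n; lia.
rewrite (gam_rho_conj (m:=l) (j:=l) v) // swapL.
rewrite (gam_rho_conj (m:=l) (j:=k) (gm l.+1 :: v)) // (@swapD l l.+1 k); try (apply/eqP; lia).
rewrite (rho_gam_conj (m:=l) (j:=l)) // swapL.
by rewrite (rho_gam_conj (m:=l) (j:=k)) // (@swapD l l.+1 k) //; apply/eqP; lia.
Qed.

Lemma gam_gam_cancel a b w : in1n n a -> in1n n b -> gm a :: gm b :: gm b :: gm a :: w ~ w.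
Proof. by move=> ha hb; rewrite !gam_sq. Qed.

Lemma conj_x_gt m k l v : rho_ok m -> in1n n k -> in1n n l -> l < k ->
  rh m :: x_word k l ++ rh m :: v ~ x_word (swap m m.+1 k) (swap m m.+1 l) ++ v.
Proof.
move=> hm hk hl hlk; have [p1 p2] := range_perm_swap hm.
have hk' := p1 _ hk; have hl' := p1 _ hl.
rewrite x_word_gam //; try (move: hk hl; rewrite /in1n; lia).
rewrite (rho_gam_conj (m:=m) (j:=k)) // (rho_gam_conj (m:=m) (j:=l)) //.
rewrite (gam_rho_conj (m:=m) (j:=k) v) // (gam_rho_conj (m:=m) (j:=l)) // conj_x_lt //.
set sk := swap m m.+1 k; set sl := swap m m.+1 l.
have ne : sk != sl by apply/eqP => /(p2 _ _ hk hl); lia.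
case: (ltnP sl sk) => h.
  by symmetry; rewrite x_word_gam //; move: hk' hl'; rewrite /in1n; lia.
have h' : sk < sl by rewrite ltn_neqAle ne.
by rewrite x_word_gam // ?gam_gam_cancel //; move: hk' hl'; rewrite /in1n; lia.
Qed.

Lemma conj_x m k l v : rho_ok m -> in1n n k -> in1n n l -> k != l ->
  rh m :: x_word k l ++ rh m :: v ~ x_word (swap m m.+1 k) (swap m m.+1 l) ++ v.
Proof.
move=> hm hk hl ne; case: (ltnP k l) => h; first exact: conj_x_lt.
by apply: conj_x_gt => //; rewrite ltn_neqAle h eq_sym ne.
Qed.

Lemma conj_psi_letter m p v : rho_ok m -> tvh_gen_ok n p.1 ->
  rh m :: psi_letter p ++ v ~ psi_letter (relabel_gen (swap m m.+1) p.1, p.2) ++ rh m :: v.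
Proof.
move=> hm; have [p1 _] := range_perm_swap hm.
case: p => [[k l|j] b] /=; last first.
  move=> hj; have hj' := p1 _ hj; rewrite /psi_letter /=.
  by case: b => /=; rewrite ?gamV //; apply: rho_gam_conj.
move=> /and3P [hk hl ne]; rewrite /psi_letter /=.
have H v' := conj_x v' hm hk hl ne.
case: b; last first.
  transitivity (rh m :: x_word k l ++ rh m :: rh m :: v); first by rewrite rho_sq.
  by rewrite H.
have := H [::]; rewrite cats0 => /(pres_eq_winv (R := tvb_rel n)).
rewrite winv_cons winv_cat /= rhoV // rhoV // => H2.
transitivity (rh m :: winv (x_word k l) ++ rh m :: rh m :: v); first by rewrite rho_sq.
by rewrite -H2 /= -catA.
Qed.

Lemma conj_psi m u v : rho_ok m -> tvh_word_ok n u ->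
  rh m :: psi u ++ v ~ psi (relabel (swap m m.+1) u) ++ rh m :: v.
Proof.
move=> hm; elim: u v => [|p u IH] v /=; first by move=> _.
by move=> /andP [hp hu]; rewrite -!catA conj_psi_letter // IH.
Qed.

Lemma conj_rhos ms u v : all rho_ok ms -> tvh_word_ok n u ->
  gw (map Rho ms) ++ psi u ++ v ~ psi (relabel (rho_perm ms) u) ++ gw (map Rho ms) ++ v.
Proof.
elim: ms v => [|m ms IH] v /=; first by move=> _ _; rewrite relabel_id.
move=> /andP [hm hms] hu; rewrite IH // conj_psi //; last first.
  by apply: tvh_word_ok_relabel => //; apply: range_perm_rho.
by rewrite relabel_comp.
Qed.

End Conjugation.

(** * The Coxeter presentation of S_n and generation *)

(* The descending run [m; m-1; ...; k]; the words rho_m ... rho_k are coset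
   representatives of S_m in S_(m+1). *)
Definition desc_run m k := rev (iota k (m.+1 - k)).

Lemma desc_run_nil m : desc_run m m.+1 = [::].
Proof. by rewrite /desc_run subnn. Qed.

Lemma desc_runS m k : k <= m -> desc_run m k = desc_run m k.+1 ++ [:: k].
Proof.
move=> h; rewrite /desc_run (_ : m.+1 - k = (m.+1 - k.+1).+1); last by lia.
by rewrite /= rev_cons cats1.
Qed.

Lemma desc_run_split m k i : k <= i -> i < m ->
  desc_run m k = desc_run m i.+2 ++ [:: i.+1; i] ++ rev (iota k (i - k)).
Proof.
move=> h1 h2; rewrite /desc_run (_ : m.+1 - k = (i - k) + (2 + (m.+1 - i.+2))); last by lia.
by rewrite !iotaD !rev_cat /= (_ : k + (i - k) = i) ?addn2 -?catA //; lia.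
Qed.

Lemma mem_desc_run m k x : x \in desc_run m k -> k <= x <= m.
Proof. by rewrite /desc_run mem_rev mem_iota; lia. Qed.

Lemma rho_perm_desc_run m k : k <= m.+1 -> rho_perm (desc_run m k) k = m.+1.
Proof. by move=> h; rewrite /desc_run rho_perm_iota_up; lia. Qed.

Section Coxeter.
Variable n : nat.
Local Notation "u ~ v" := (tvb_eq n u v) (at level 70).
Local Notation rho_ok := (rho_ok n).

Lemma rhos_normal_form m ms : m <= n - 1 -> all (fun i => 1 <= i <= m) ms ->
  exists ms' k, [/\ all (fun i => 1 <= i < m) ms', 1 <= k <= m.+1 &
     gw (map Rho ms) ~ gw (map Rho (ms' ++ desc_run m k))].
Proof.
move=> hm; elim/last_ind: ms => [|ms j IH].
  by move=> _; exists [::], m.+1; rewrite desc_run_nil; split => //; lia.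
rewrite all_rcons => /andP [hj /IH [ms' [k [h1 h2 H]]]].
have rj : rho_ok j by rewrite /rho_ok; lia.
have HW : gw (map Rho (rcons ms j)) ~
    gw (map Rho ms') ++ gw (map Rho (desc_run m k)) ++ [:: rh j].
  by rewrite map_rcons -cats1 gw_cat H map_cat gw_cat -catA.
case: (ltnP j.+1 k) => hjk.
  exists (ms' ++ [:: j]), k; split => //; first by rewrite all_cat h1 /=; lia.
  rewrite HW !map_cat !gw_cat -!catA /=; apply: cat_pres_eq => //.
  symmetry; rewrite -[gw (map Rho (desc_run m k))]cats0 rho_far_letters_comm // ?cats0 //.
  by rewrite all_map; apply/allP => x /mem_desc_run hx /=; rewrite /rho_ok /farb; lia.
case: (ltnP j k) => hjk2.
  exists ms', j; split => //; first lia.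
  by rewrite HW (_ : k = j.+1) ?(desc_runS (m := m) (k := j)) ?map_cat ?gw_cat //; lia.
case: (ltnP k j) => hjk3; last first.
  have ek : j = k by lia.
  subst j; exists ms', k.+1; split => //; first lia.
  rewrite HW (desc_runS (m := m) (k := k)); last lia.
  by rewrite !map_cat !gw_cat -!catA /= rho_sq // cats0.
have [i ei] : exists i, j = i.+1 by exists j.-1; lia.
subst j; exists (ms' ++ [:: i]), k; split => //; first by rewrite all_cat h1 /=; lia.
rewrite HW (desc_run_split (m := m) (k := k) (i := i)); try lia.
rewrite !map_cat !gw_cat -!catA /=; apply: cat_pres_eq => //.
have r1 : rho_ok i.+1 by rewrite /rho_ok; lia.
have r0 : rho_ok i by rewrite /rho_ok; lia.
have F1 : all (far_letter n i.+1) (map Rho (rev (iota k (i - k)))).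
  by rewrite all_map; apply/allP => x /=; rewrite mem_rev mem_iota /rho_ok /farb; lia.
have F2 : all (far_letter n i) (map Rho (desc_run m i.+2)).
  by rewrite all_map; apply/allP => x /mem_desc_run /=; rewrite /rho_ok /farb; lia.
rewrite -[[:: rh i.+1]]/(rh i.+1 :: [::]) -(@rho_far_letters_comm n i.+1 _ [::] r1 F1) cats0.
by rewrite -rho_braid; try lia; rewrite -(@rho_far_letters_comm n i _ _ r0 F2).
Qed.

Lemma rhos_trivial m ms : m <= n - 1 -> all (fun i => 1 <= i <= m) ms ->
  (forall x, 1 <= x <= m.+1 -> rho_perm ms x = x) -> gw (map Rho ms) ~ [::].
Proof.
elim: m ms => [|m IH] ms hm hms hP.
  by case: ms hms hP => [_ _|i ms /= /andP [hi _]] //; lia.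
have [ms' [k [h1 h2 H]]] := rhos_normal_form hm hms.
have ok_ms : all rho_ok ms by apply/allP => x /(allP hms); rewrite /rho_ok; lia.
have ok_ms' : all rho_ok (ms' ++ desc_run m.+1 k).
  rewrite all_cat; apply/andP; split; apply/allP.
    by move=> x /(allP h1); rewrite /rho_ok; lia.
  by move=> x /mem_desc_run; rewrite /rho_ok; lia.
have E x : rho_perm ms x = rho_perm (ms' ++ desc_run m.+1 k) x.
  by have := phiH_pres (tvb_word_ok_rhos ok_ms) (tvb_word_ok_rhos ok_ms') H x;
     rewrite -!(phiH_rhos false).
have fix_ms' x : m.+2 <= x -> rho_perm ms' x = x.
  by move=> hx; apply: rho_perm_id; apply/allP => y /(allP h1); lia.
have ek : k = m.+2.
  have := hP k h2; rewrite E rho_perm_cat rho_perm_desc_run; last lia.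
  by rewrite fix_ms' //; lia.
subst k; rewrite H desc_run_nil cats0; apply: IH; first lia.
  by apply/allP => x /(allP h1); lia.
by move=> x hx; rewrite -[RHS](hP x); [rewrite E desc_run_nil cats0 | lia].
Qed.

Lemma tvb_word_decomp w : tvb_word_ok n w -> exists u ms,
  [/\ tvh_word_ok n u, all rho_ok ms & w ~ psi u ++ gw (map Rho ms)].
Proof.
elim: w => [|[g b] w IH] /=; first by move=> _; exists [::], [::]; split.
move=> /andP [hg /IH [u [ms [hu hms H]]]]; case: g hg => [i|i|j] /= hg.
- exists ((X i i.+1, b) :: u), ms; split => //=; first by rewrite hu andbT /in1n; lia.
  by rewrite psi_cons psi_letterE /= x_seq_12 H.
- have hi : rho_ok i by [].
  exists (relabel (swap i i.+1) u), (i :: ms); split => /=; rewrite ?hi ?hms //.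
    by apply: tvh_word_ok_relabel => //; apply: range_perm_swap.
  rewrite H; transitivity (rh i :: psi u ++ gw (map Rho ms)).
    by case: b; rewrite ?rhoV.
  exact: conj_psi.
- exists ((G j, b) :: u), ms; split => //=; first by rewrite hu andbT.
  by rewrite psi_cons psi_letterE /= H.
Qed.

End Coxeter.

(** * The relations of TVH_n hold in TVB_n *)

Lemma sorting_rhos n s t0 : uniq s -> all (fun a => t0 < a <= n) s -> exists ms,
  [/\ all (rho_ok n) ms, (forall x, x <= t0 -> rho_perm ms x = x) &
      (forall t, t < size s -> rho_perm ms (nth 0 s t) = t0 + t.+1)].
Proof.
move: {2}(size s) (erefl (size s)) => z; elim: z s t0 => [|z IH] [|a s] t0 //=.
  by move=> _ _ _; exists [::]; split.
move=> [ez] /andP [ha hu] /andP [hab hs].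
set D := iota t0.+1 (a - t0.+1).
have hD : rho_perm D a = t0.+1.
  by have := rho_perm_iota_down t0.+1 (a - t0.+1); rewrite (_ : t0.+1 + (a - t0.+1) = a) //; lia.
have hDlo x : x <= t0 -> rho_perm D x = x.
  by move=> hx; apply: rho_perm_id; apply/allP => y; rewrite mem_iota; lia.
have rD : all (rho_ok n) D by apply/allP => x; rewrite mem_iota /rho_ok; lia.
have [p1 _] := range_perm_rho rD.
have U : uniq (map (rho_perm D) s) by rewrite map_inj_uniq //; apply: rho_perm_inj.
have A : all (fun a => t0.+1 < a <= n) (map (rho_perm D) s).
  apply/allP => y /mapP [b hb ->]; have hb' := allP hs b hb.
  have y1 : rho_perm D b != t0.+1.
    by apply/eqP; rewrite -hD => /rho_perm_inj eb; rewrite -eb hb in ha.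
  have y2 : t0 < rho_perm D b.
    by rewrite ltnNge; apply/negP => le; have := rho_perm_inj (hDlo _ le); lia.
  by have := p1 b; rewrite /in1n; lia.
have [ms [h1 h2 h3]] := IH _ t0.+1 (etrans (size_map _ _) ez) U A.
exists (ms ++ D); split.
- by rewrite all_cat h1 rD.
- by move=> x hx; rewrite rho_perm_cat hDlo // h2 //; lia.
- case=> [|t] ht /=; first by rewrite rho_perm_cat hD h2 //; lia.
  rewrite rho_perm_cat -(nth_map 0 0 (rho_perm D)); last lia.
  by rewrite size_map in h3; rewrite h3; lia.
Qed.

Lemma rhos_rev_cancel n ms v : all (rho_ok n) ms ->
  tvb_eq n (gw (map Rho (rev ms)) ++ gw (map Rho ms) ++ v) v.
Proof.
elim: ms v => [|m ms IH] v /=; first by move=> _.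
move=> /andP [hm hms]; rewrite rev_cons map_rcons -cats1 gw_cat -catA /=.
by rewrite rho_sq // IH.
Qed.

Section TVHRelations.
Variable n : nat.
Local Notation "u ~ v" := (tvb_eq n u v) (at level 70).

Lemma psi_eq_relabel ms r s : all (rho_ok n) ms -> tvh_word_ok n r -> tvh_word_ok n s ->
  psi (relabel (rho_perm ms) r) ~ psi (relabel (rho_perm ms) s) -> psi r ~ psi s.
Proof.
move=> hms hr hs H.
transitivity (gw (map Rho (rev ms)) ++ gw (map Rho ms) ++ psi r ++ [::]).
  by rewrite rhos_rev_cancel // cats0.
by rewrite conj_rhos // H -conj_rhos // rhos_rev_cancel // cats0.
Qed.

Lemma tvh_rel_word_ok r s : tvh_rel n r s -> tvh_word_ok n r /\ tvh_word_ok n s.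
Proof.
case=> [[i [j [k [l [h u -> ->]]]]]|[[i [j [k [h u -> ->]]]]|[[i [h -> ->]]|
        [[i [j [h u -> ->]]]|[[i [j [k [h u -> ->]]]]|[i [j [h u -> ->]]]]]]]];
  first [move: h u | move: h]; rewrite /tvh_word_ok /in1n /= ?inE; split; lia.
Qed.

(* The relations involving three or four indices reduce, after sorting the indices, to
   relations between sigma_1, sigma_2, sigma_3 and gamma_3. *)
Lemma psi_x_comm i j k l : [&& in1n n i, in1n n j, in1n n k & in1n n l] ->
  uniq [:: i; j; k; l] -> psi (gw [:: X i j; X k l]) ~ psi (gw [:: X k l; X i j]).
Proof.
move=> h u; have [hr hs] : tvh_word_ok n (gw [:: X i j; X k l]) /\
                            tvh_word_ok n (gw [:: X k l; X i j]).
  by apply: tvh_rel_word_ok; left; exists i, j, k, l.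
have hsort : all (fun a => 0 < a <= n) [:: i; j; k; l] by case/and4P: h; rewrite /in1n /= => -> -> -> ->.
have [ms [hms _ hP]] := sorting_rhos u hsort.
have Pi := hP 0 erefl; have Pj := hP 1 erefl; have Pk := hP 2 erefl; have Pl := hP 3 erefl.
rewrite /= !add0n in Pi Pj Pk Pl.
have h4 : in1n n 4 by rewrite -Pl; apply: (range_perm_rho hms).1; case/and4P: h.
apply: (psi_eq_relabel hms hr hs).
rewrite /relabel /mapw /= Pi Pj Pk Pl !psi_cons !psi_letterE /= /minn /psi /=.
by apply: sig_far_comm; move: h4; rewrite /rho_ok /farb /in1n; lia.
Qed.

Lemma psi_x_braid i j k : [&& in1n n i, in1n n j & in1n n k] -> uniq [:: i; j; k] ->
  psi (gw [:: X i k; X k j; X i k]) ~ psi (gw [:: X k j; X i k; X k j]).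
Proof.
move=> h u; have [hr hs] : tvh_word_ok n (gw [:: X i k; X k j; X i k]) /\
                            tvh_word_ok n (gw [:: X k j; X i k; X k j]).
  by apply: tvh_rel_word_ok; right; left; exists i, j, k.
have hsort : all (fun a => 0 < a <= n) [:: i; k; j].
  by case/and3P: h; rewrite /in1n /= => -> -> ->.
have u' : uniq [:: i; k; j] by move: u; rewrite /= !inE; lia.
have [ms [hms _ hP]] := sorting_rhos u' hsort.
have Pi := hP 0 erefl; have Pk := hP 1 erefl; have Pj := hP 2 erefl.
rewrite /= !add0n in Pi Pj Pk.
have h3 : in1n n 3 by rewrite -Pj; apply: (range_perm_rho hms).1; case/and3P: h.
apply: (psi_eq_relabel hms hr hs).
rewrite /relabel /mapw /= Pi Pj Pk !psi_cons !psi_letterE /= /minn /psi /=.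
by apply: sig_braid; move: h3; rewrite /in1n; lia.
Qed.

Lemma psi_x_gam_comm i j k : [&& in1n n i, in1n n j & in1n n k] -> uniq [:: i; j; k] ->
  psi (gw [:: X i j; G k]) ~ psi (gw [:: G k; X i j]).
Proof.
move=> h u; have [hr hs] : tvh_word_ok n (gw [:: X i j; G k]) /\
                            tvh_word_ok n (gw [:: G k; X i j]).
  by apply: tvh_rel_word_ok; do 4 right; left; exists i, j, k.
have hsort : all (fun a => 0 < a <= n) [:: i; j; k].
  by case/and3P: h; rewrite /in1n /= => -> -> ->.
have [ms [hms _ hP]] := sorting_rhos u hsort.
have Pi := hP 0 erefl; have Pj := hP 1 erefl; have Pk := hP 2 erefl.
rewrite /= !add0n in Pi Pj Pk.
have h3 : in1n n 3 by rewrite -Pk; apply: (range_perm_rho hms).1; case/and3P: h.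
apply: (psi_eq_relabel hms hr hs).
rewrite /relabel /mapw /= Pi Pj Pk !psi_cons !psi_letterE /= /minn /psi /=.
by symmetry; apply: gam_sig_comm; move: h3; rewrite /rho_ok /in1n; lia.
Qed.

Lemma psi_x_gam i j : in1n n i -> in1n n j -> i != j ->
  psi (gw [:: X i j]) ~ psi (gw [:: G i; G j; X j i; G j; G i]).
Proof.
move=> hi hj ne; rewrite !psi_cons /psi /= /psi_letter /= cats0.
move: (hi) (hj); rewrite /in1n => hi' hj'.
case: (ltnP j i) => hji.
  by rewrite -[x_word i j]cats0 (@x_word_gam n j i) //; lia.
have hij : i < j by rewrite ltn_neqAle ne hji.
rewrite (@x_word_gam n i j) //; try lia.
by rewrite !gam_gam_cancel // cats0.
Qed.

Lemma psi_tvh_rel r s : tvh_rel n r s -> psi r ~ psi s.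
Proof.
case=> [[i [j [k [l [h u -> ->]]]]]|[[i [j [k [h u -> ->]]]]|[[i [h -> ->]]|
        [[i [j [h u -> ->]]]|[[i [j [k [h u -> ->]]]]|[i [j [h u -> ->]]]]]]]].
- exact: psi_x_comm.
- exact: psi_x_braid.
- by rewrite /psi /= gam_sq.
- by case/andP: h => hi hj; rewrite /psi /= gam_comm.
- exact: psi_x_gam_comm.
- by case/andP: h => hi hj; apply: psi_x_gam.
Qed.

Lemma tvb_eq_of_tvh_eq u v : tvh_eq n u v -> psi u ~ psi v.
Proof.
have psi_inv g : psi_letter (g, true) = winv (psi_letter (g, false)) by case: g.
elim=> {u v} [w|u v _ IH|u v w _ IH1 _ IH2|u a b v|u r s v Hr].
- by [].
- by symmetry.
- by transitivity (psi v).
- rewrite !psi_cat !psi_cons; apply: cat_pres_eq => //.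
  case: b => /=; rewrite psi_inv ?winvK;
    by [apply: winv_cat_cancel | apply: cat_winv_cancel].
- by rewrite !psi_cat; apply: cat_pres_eq => //; apply: cat_pres_eq => //; apply: psi_tvh_rel.
Qed.

End TVHRelations.

Theorem mainTheorem9 (n : nat) (hn : 2 <= n) :
  (* the x_kl and g_j lie in TVH_n *)
  (forall u, tvh_word_ok n u -> in_TVH n (psi u))
  (* they generate TVH_n *)
  /\ (forall w, tvb_word_ok n w -> in_TVH n w ->
        exists u, tvh_word_ok n u /\ tvb_eq n w (psi u))
  (* the listed relations are a complete set of defining relations *)
  /\ (forall u v, tvh_word_ok n u -> tvh_word_ok n v ->
        (tvb_eq n (psi u) (psi v) <-> tvh_eq n u v)).
Proof.
(* The argument does not use [hn]. *)
split; first by move=> u _ k _; apply: phiH_psi.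
split; last by move=> u v hu hv; split; [apply: tvh_eq_of_tvb_eq | apply: tvb_eq_of_tvh_eq].
move=> w hw hin; have [u [ms [hu hms H]]] := tvb_word_decomp hw.
exists u; split => //.
have ok_rhs : tvb_word_ok n (psi u ++ gw (map Rho ms)).
  by rewrite /tvb_word_ok all_cat; apply/andP; split;
    [apply: tvb_word_ok_psi | apply: tvb_word_ok_rhos].
have fix_ms x : 1 <= x <= (n - 1).+1 -> rho_perm ms x = x.
  move=> hx; have /hin : 1 <= x <= n by lia.
  by rewrite (phiH_pres hw ok_rhs H) phiH_cat phiH_psi (phiH_rhos false).
have hms' : all (fun i => 1 <= i <= n - 1) ms by apply/allP => x /(allP hms).
by rewrite H (rhos_trivial (m := n - 1) (leqnn _) hms' fix_ms) cats0.
Qed.
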